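(* Let $0<\alpha<1$, $T>0$, $y\in C^2[0,T]$, and $x\in(0,T]$. For an integer $N\ge 2$ put $h=T/N$ and suppose $n=x/h$ is an integer; write $y_j=y(jh)$. Define $\bar\sigma_0^{(\alpha)}=1/\Gamma(2-\alpha)$, $$\bar\sigma_k^{(\alpha)}=\begin{cases}\dfrac{(k-1)^{1-\alpha}-2k^{1-\alpha}+(k+1)^{1-\alpha}}{\Gamma(2-\alpha)}, & 1\le k\le\lceil N/5\rceil,\\[6pt] \dfrac{1}{\Gamma(-\alpha)k^{1+\alpha}}+\dfrac{\alpha}{12\,\Gamma(-2-\alpha)k^{3+\alpha}}, & \lceil N/5\rceil<k\le n-1,\end{cases}$$ $$\bar\sigma_n^{(\alpha)}=\begin{cases}\dfrac{(n-1)^{1-\alpha}-n^{1-\alpha}}{\Gamma(2-\alpha)}, & n\le\lceil N/5\rceil,\\[6pt] -\dfrac{n^{-\alpha}}{\Gamma(1-\alpha)}+\dfrac{n^{-\alpha-1}}{2\Gamma(-\alpha)}-\dfrac{n^{-\alpha-2}}{6\Gamma(-1-\alpha)}, & n>\lceil N/5\rceil.\end{cases}$$ Then, as $h\to0$ (over those $N$ for which $x/h$ is an integer), $$\frac{1}{h^\alpha}\sum_{k=0}^n\bar\sigma_k^{(\alpha)}y_{n-k}=y^{(\alpha)}(x)+O(h^{2-\alpha}).$$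
   Context: For $0<\alpha<1$ the Caputo derivative is $y^{(\alpha)}(x)=\frac{1}{\Gamma(1-\alpha)}\int_0^x \frac{y'(t)}{(x-t)^\alpha}\,dt$. $\Gamma$ is the Euler gamma function (analytically continued to negative non-integers); $\lceil\cdot\rceil$ is the ceiling function. *)

From Stdlib Require Import Reals Lra Lia ClassicalEpsilon Factorial.
Open Scope R_scope.

(* Real power with the convention 0^a = 0 (used only for a > 0 at base 0);
   for x > 0 it is the usual x^a = exp(a ln x). *)
Definition rpow (x a : R) : R :=
  if Rle_dec x 0 then 0 else Rpower x a.

Definition gauss_seq (z : R) (n : nat) : R :=
  INR (fact n) * Rpower (INR n) z / prod_f_R0 (fun k => z + INR k) n.

(* Euler Gamma function, valid (and analytically continued) at every z that is
   not a non-positive integer, via Gauss' limit formula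
   Gamma(z) = lim_{n->oo} n! n^z / (z(z+1)...(z+n)). *)
Definition Gamma (z : R) : R :=
  epsilon (inhabits 0) (fun g => Un_cv (gauss_seq z) g).

Definition improper_int_right (f : R -> R) (a b I : R) : Prop :=
  forall eps, 0 < eps -> exists delta, 0 < delta /\
    forall c, a <= c -> b - delta < c < b ->
      exists pr : Riemann_integrable f a c, Rabs (RiemannInt pr - I) < eps.

(* Caputo derivative of order alpha at x, given y' = y1:
   (1/Gamma(1-alpha)) int_0^x y1(t)/(x-t)^alpha dt. *)
Definition is_caputo (y1 : R -> R) (alpha x v : R) : Prop :=
  exists I, improper_int_right (fun t => y1 t / rpow (x - t) alpha) 0 x I
            /\ v = I / Gamma (1 - alpha).

Definition ceil5 (N : nat) : nat := Nat.div (N + 4) 5.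

Definition sigma_bar (alpha : R) (N n k : nat) : R :=
  if Nat.eqb k 0 then 1 / Gamma (2 - alpha)
  else if Nat.ltb k n then
    (if Nat.leb k (ceil5 N) then
       (rpow (INR k - 1) (1 - alpha) - 2 * rpow (INR k) (1 - alpha)
        + rpow (INR k + 1) (1 - alpha)) / Gamma (2 - alpha)
     else
       1 / (Gamma (- alpha) * rpow (INR k) (1 + alpha))
       + alpha / (12 * Gamma (-2 - alpha) * rpow (INR k) (3 + alpha)))
  else
    (if Nat.leb n (ceil5 N) then
       (rpow (INR n - 1) (1 - alpha) - rpow (INR n) (1 - alpha)) / Gamma (2 - alpha)
     else
       - rpow (INR n) (- alpha) / Gamma (1 - alpha)
       + rpow (INR n) (- alpha - 1) / (2 * Gamma (- alpha))
       - rpow (INR n) (- alpha - 2) / (6 * Gamma (-1 - alpha))).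

(* The weights split as [l1_weight (1 - al) / Gamma (2 - al)] (the classical L1 weights) plus a
   defect vanishing for [k <= ceil(N/5)].  By summation by parts and [Gamma (2 - al) =
   (1 - al) Gamma (1 - al)], the L1 part is the product-integration rule that integrates the
   kernel [(x - t)^(-al)] exactly against the piecewise linear interpolant of [y]; on each cell
   the difference quotient is within [M2 h] of [y'] and the kernel is increasing, so the cell
   errors telescope to [O(h^(2 - al))].  Beyond [ceil(N/5)] the weights are the leading terms of
   the Taylor expansion of the second difference of [k^(1 - al)] (of the last backward difference
   at [k = n]), rewritten with [Gamma (1 - al) = - al Gamma (- al)], so the defect is
   [O(k^(-al-3))] (resp. [O(n^(-al-2))]).  There [k h >= T / 5], so [h^(-al) k^(-al)] stays
   bounded and the rest telescopes to [O(ceil(N/5)^(-2)) = O(h^2)].  The two Gamma recurrences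
   are read off Gauss' product formula, which converges for [0 < z < 1] by monotonicity. *)

From Stdlib Require Import Reals Lra Lia ClassicalEpsilon Factorial.
From Coquelicot Require Import Coquelicot.
Open Scope R_scope.

(** * Finite sums *)

Fixpoint sum_lt (F : nat -> R) (m : nat) : R :=
  match m with O => 0 | S m => sum_lt F m + F m end.

Lemma sum_lt_ext (F G : nat -> R) m :
  (forall j, (j < m)%nat -> F j = G j) -> sum_lt F m = sum_lt G m.
Proof.
  induction m as [|m IH]; intro E; simpl; [reflexivity|].
  rewrite IH by (intros; apply E; lia). rewrite E by lia. reflexivity.
Qed.

Lemma sum_lt_shift (F : nat -> R) n : sum_lt F (S n) = F 0%nat + sum_lt (fun j => F (S j)) n.
Proof.
  induction n as [|n IH]; [simpl; ring|].
  change (sum_lt F (S (S n))) with (sum_lt F (S n) + F (S n)). rewrite IH. simpl. ring.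
Qed.

Lemma sum_lt_rev (F : nat -> R) n : sum_lt F n = sum_lt (fun j => F (n - 1 - j)%nat) n.
Proof.
  induction n as [|n IH]; [reflexivity|].
  change (sum_lt F (S n)) with (sum_lt F n + F n).
  rewrite (sum_lt_shift (fun j => F (S n - 1 - j)%nat)), IH.
  replace (S n - 1 - 0)%nat with n by lia.
  rewrite (sum_lt_ext (fun j => F (S n - 1 - S j)%nat) (fun j => F (n - 1 - j)%nat))
    by (intros; f_equal; lia).
  ring.
Qed.

Lemma sum_lt_scal (F : nat -> R) c n : sum_lt (fun j => c * F j) n = c * sum_lt F n.
Proof. induction n as [|n IH]; simpl; [ring|rewrite IH; ring]. Qed.

(** * Real powers *)

Lemma Rpower_pos x p : 0 < Rpower x p.
Proof. apply exp_pos. Qed.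

Lemma Rpower_1_base p : Rpower 1 p = 1.
Proof. unfold Rpower. rewrite ln_1, Rmult_0_r. apply exp_0. Qed.

Lemma Rpower_1_plus h p : 0 < h -> h * Rpower h p = Rpower h (1 + p).
Proof. intro Hh. rewrite Rpower_plus, Rpower_1 by exact Hh. reflexivity. Qed.

Lemma Rpower_antitone_l p v w : p <= 0 -> 0 < v <= w -> Rpower w p <= Rpower v p.
Proof.
  intros Hp Hvw. rewrite <- (Ropp_involutive p), !(Rpower_Ropp _ (- p)).
  apply Rinv_le_contravar; [apply Rpower_pos|]. apply Rle_Rpower_l; lra.
Qed.

Lemma Rpower_le_at_half p (m : nat) u t : p <= 0 -> - p <= INR m -> 0 < u -> u / 2 <= t ->
  Rpower t p <= 2 ^ m * Rpower u p.
Proof.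
  intros Hp Hm Hu Ht.
  apply Rle_trans with (Rpower (u / 2) p).
  { apply Rpower_antitone_l; lra. }
  unfold Rdiv. rewrite <- Rpower_mult_distr, Rmult_comm by lra.
  apply Rmult_le_compat_r; [left; apply Rpower_pos|].
  replace (Rpower (/ 2) p) with (Rpower 2 (- p))
    by (unfold Rpower; rewrite ln_Rinv by lra; f_equal; ring).
  rewrite <- Rpower_pow by lra. apply Rle_Rpower; lra.
Qed.

Lemma Rpower_small q e : 0 < q -> 0 < e -> exists d, 0 < d /\ forall u, 0 < u < d -> Rpower u q < e.
Proof.
  intros Hq He. exists (Rpower e (/ q)). split; [apply Rpower_pos|].
  intros u Hu. replace e with (Rpower (Rpower e (/ q)) q).
  - apply Rlt_Rpower_l; lra.
  - rewrite Rpower_mult, Rinv_l, Rpower_1; lra.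
Qed.

Lemma Rpower_neg_INR k (m : nat) : 0 < k -> Rpower k (- INR m) = / k ^ m.
Proof. intro Hk. rewrite Rpower_Ropp, Rpower_pow by lra. reflexivity. Qed.

Lemma Rpower_scaled_le al p h c k : 0 < al -> 0 < h -> 0 < c <= k * h -> 0 < k ->
  / Rpower h al * Rpower k (- al - p) <= Rpower c (- al) * Rpower k (- p).
Proof.
  intros Hal Hh Hc Hk.
  rewrite <- Rpower_Ropp. replace (- al - p) with (- al + - p) by ring.
  rewrite Rpower_plus, <- Rmult_assoc, Rpower_mult_distr by lra.
  apply Rmult_le_compat_r; [left; apply Rpower_pos|]. apply Rpower_antitone_l; nra.
Qed.

Lemma sq_le_Rpower al h T : 0 <= al -> 0 < h <= T -> h * h <= Rpower T al * Rpower h (2 - al).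
Proof.
  intros Hal Hh.
  replace (h * h) with (Rpower h al * Rpower h (2 - al)).
  - apply Rmult_le_compat_r; [left; apply Rpower_pos|]. apply Rle_Rpower_l; lra.
  - rewrite <- Rpower_plus. replace (al + (2 - al)) with (INR 2) by (simpl; ring).
    rewrite Rpower_pow by lra. simpl. ring.
Qed.

Lemma is_derive_Rpower v p : 0 < v -> is_derive (fun x => Rpower x p) v (p * Rpower v (p - 1)).
Proof. intro Hv. apply is_derive_Reals, derivable_pt_lim_power, Hv. Qed.

Lemma Derive_Rpower v p : 0 < v -> Derive (fun x => Rpower x p) v = p * Rpower v (p - 1).
Proof. intro Hv. apply is_derive_unique, is_derive_Rpower, Hv. Qed.

Lemma Rpower_le_tangent z u : 0 < z < 1 -> 0 < u -> Rpower u z <= 1 + z * (u - 1).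
Proof.
  intros Hz Hu.
  assert (Hd : forall c, 0 < c -> derivable_pt_lim (fun t => Rpower t z) c (z * Rpower c (z - 1)))
    by (intros; apply derivable_pt_lim_power; lra).
  destruct (Rtotal_order u 1) as [Hlt|[->|Hgt]].
  - destruct (MVT_cor2 _ _ u 1 Hlt (fun c Hc => Hd c ltac:(lra))) as [c [Ec Hc]].
    rewrite Rpower_1_base in Ec.
    assert (1 < Rpower c (z - 1)).
    { replace (z - 1) with (- (1 - z)) by ring. rewrite Rpower_Ropp.
      pose proof (Rlt_Rpower_l c 1 (1 - z) ltac:(lra) ltac:(lra)) as Hc1.
      rewrite Rpower_1_base in Hc1. pose proof (Rpower_pos c (1 - z)).
      rewrite <- Rinv_1 at 1. apply Rinv_lt_contravar; lra. }
    assert (0 <= z * (Rpower c (z - 1) - 1) * (1 - u)) by (apply Rmult_le_pos; [apply Rmult_le_pos|]; lra).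
    nra.
  - rewrite Rpower_1_base. lra.
  - destruct (MVT_cor2 _ _ 1 u Hgt (fun c Hc => Hd c ltac:(lra))) as [c [Ec Hc]].
    rewrite Rpower_1_base in Ec.
    assert (Rpower c (z - 1) < 1).
    { apply Rlt_le_trans with (Rpower c 0); [apply Rpower_lt; lra|rewrite Rpower_O; lra]. }
    assert (0 <= z * (1 - Rpower c (z - 1)) * (u - 1)) by (apply Rmult_le_pos; [apply Rmult_le_pos|]; lra).
    nra.
Qed.

Lemma rpow_pos_eq u p : 0 < u -> rpow u p = Rpower u p.
Proof. intro Hu. unfold rpow. destruct (Rle_dec u 0); [lra|reflexivity]. Qed.

Lemma rpow_nonpos u p : u <= 0 -> rpow u p = 0.
Proof. intro Hu. unfold rpow. destruct (Rle_dec u 0); [reflexivity|lra]. Qed.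

Lemma rpow0 a : rpow 0 a = 0.
Proof. apply rpow_nonpos. lra. Qed.

Lemma rpow1 a : rpow 1 a = 1.
Proof. rewrite rpow_pos_eq by lra. apply Rpower_1_base. Qed.

Lemma rpow_mult_pos u h a : 0 <= u -> 0 < h -> rpow (u * h) a = rpow u a * Rpower h a.
Proof.
  intros Hu Hh. destruct (Req_dec u 0) as [->|Hne].
  - rewrite Rmult_0_l, rpow0. ring.
  - rewrite !rpow_pos_eq by nra. symmetry. apply Rpower_mult_distr; lra.
Qed.

(** * The Gamma recurrence *)

Lemma Gamma_of_lim z L : Un_cv (gauss_seq z) L -> Gamma z = L.
Proof.
  intro HL. unfold Gamma.
  apply (UL_sequence (gauss_seq z)); [|exact HL].
  exact (epsilon_spec (inhabits 0) (fun g => Un_cv (gauss_seq z) g) (ex_intro _ L HL)).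
Qed.

Lemma prod_f_R0_pos (f : nat -> R) n : (forall k, 0 < f k) -> 0 < prod_f_R0 f n.
Proof. intro Hf. induction n; simpl; auto using Rmult_lt_0_compat. Qed.

Lemma prod_f_R0_neq0 (f : nat -> R) n : (forall k, f k <> 0) -> prod_f_R0 f n <> 0.
Proof. intro Hf. induction n; simpl; auto using Rmult_integral_contrapositive_currified. Qed.

Lemma prod_f_R0_shift_arg z n :
  prod_f_R0 (fun k => z + 1 + INR k) n * z = prod_f_R0 (fun k => z + INR k) n * (z + INR n + 1).
Proof.
  induction n as [|n IH]; [simpl; ring|].
  change (prod_f_R0 (fun k => z + 1 + INR k) n * (z + 1 + INR (S n)) * z
          = prod_f_R0 (fun k => z + INR k) n * (z + INR (S n)) * (z + INR (S n) + 1)).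
  rewrite S_INR.
  transitivity (prod_f_R0 (fun k => z + 1 + INR k) n * z * (z + 1 + (INR n + 1))); [ring|].
  rewrite IH. ring.
Qed.

(* The Gauss sequence turns [Gamma (z + 1) = z Gamma z] into a factor tending to [z]. *)
Lemma gauss_seq_succ z n : (1 <= n)%nat -> (forall k, z + INR k <> 0) ->
  gauss_seq (z + 1) n = gauss_seq z n * (z * INR n / (z + INR n + 1)).
Proof.
  intros Hn Hz.
  assert (Hz0 : z <> 0) by (specialize (Hz 0%nat); simpl in Hz; lra).
  assert (Hzn : z + INR n + 1 <> 0) by (specialize (Hz (S n)); rewrite S_INR in Hz; lra).
  assert (HP : prod_f_R0 (fun k => z + 1 + INR k) n
               = prod_f_R0 (fun k => z + INR k) n * (z + INR n + 1) / z).
  { rewrite <- prod_f_R0_shift_arg. field. exact Hz0. }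
  unfold gauss_seq. rewrite Rpower_plus, Rpower_1 by (apply lt_0_INR; lia).
  rewrite HP. field. repeat split; auto using prod_f_R0_neq0.
Qed.

Lemma Un_cv_const c : Un_cv (fun _ => c) c.
Proof. intros e He. exists 0%nat. intros. unfold Rdist. rewrite Rminus_diag, Rabs_R0. lra. Qed.

Lemma Un_cv_const_div_INR c d : Un_cv (fun n => c / (d + INR n)) 0.
Proof.
  apply is_lim_seq_Reals. replace 0 with (c * 0) by ring.
  apply (is_lim_seq_scal_l (fun n => / (d + INR n)) c 0).
  apply (is_lim_seq_inv _ p_infty); [|discriminate].
  eapply is_lim_seq_plus; [apply is_lim_seq_const|apply is_lim_seq_INR|reflexivity].
Qed.

Lemma Un_cv_eventually_ext (u v : nat -> R) L m :
  (forall n, (m <= n)%nat -> u n = v n) -> Un_cv u L -> Un_cv v L.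
Proof.
  intros Euv Hu eps Heps. destruct (Hu eps Heps) as [N HN]. exists (max N m).
  intros n Hn. rewrite <- Euv by lia. apply HN. lia.
Qed.

Lemma gauss_lim_succ z L : (forall k, z + INR k <> 0) ->
  Un_cv (gauss_seq z) L -> Un_cv (gauss_seq (z + 1)) (L * z).
Proof.
  intros Hz HL.
  apply (Un_cv_eventually_ext (fun n => gauss_seq z n * (z - z * (z + 1) / ((z + 1) + INR n))) _ _ 1).
  - intros n Hn. rewrite gauss_seq_succ by auto. f_equal.
    specialize (Hz (S n)). rewrite S_INR in Hz. field. lra.
  - apply CV_mult; [exact HL|].
    pose proof (CV_minus _ _ _ _ (Un_cv_const z) (Un_cv_const_div_INR (z * (z + 1)) (z + 1))) as H.
    rewrite Rminus_0_r in H. exact H.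
Qed.

Lemma gauss_lim_pred z L : (forall k, z + INR k <> 0) ->
  Un_cv (gauss_seq (z + 1)) L -> Un_cv (gauss_seq z) (L * / z).
Proof.
  intros Hz HL.
  assert (Hz0 : z <> 0) by (specialize (Hz 0%nat); simpl in Hz; lra).
  apply (Un_cv_eventually_ext (fun n => gauss_seq (z + 1) n * (/ z + ((z + 1) / z) / (0 + INR n))) _ _ 1).
  - intros n Hn. rewrite gauss_seq_succ by auto.
    assert (0 < INR n) by (apply lt_0_INR; lia).
    specialize (Hz (S n)). rewrite S_INR in Hz. field. repeat split; lra.
  - apply CV_mult; [exact HL|].
    pose proof (CV_plus _ _ _ _ (Un_cv_const (/ z)) (Un_cv_const_div_INR ((z + 1) / z) 0)) as H.
    rewrite Rplus_0_r in H. exact H.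
Qed.

Section GaussSequence.

Variable z : R.
Hypothesis Hz : 0 < z < 1.

Let P n := prod_f_R0 (fun k => z + INR k) n.

Let P_pos n : 0 < P n.
Proof. apply prod_f_R0_pos. intro k. pose proof (pos_INR k). lra. Qed.

Lemma gauss_seq_nonneg n : 0 <= gauss_seq z n.
Proof.
  pose proof (lt_0_INR _ (lt_O_fact n)). pose proof (Rpower_pos (INR n) z). pose proof (P_pos n).
  unfold gauss_seq. fold (P n). apply Rmult_le_pos; [nra|left; apply Rinv_0_lt_compat; lra].
Qed.

Lemma gauss_seq_incr m : (1 <= m)%nat -> gauss_seq z m <= gauss_seq z (S m).
Proof.
  intros Hm.
  assert (Hm0 : 0 < INR m) by (apply lt_0_INR; lia).
  pose proof (P_pos m). pose proof (lt_0_INR _ (lt_O_fact m)).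
  set (q := INR m / (INR m + 1)).
  assert (Hq : 0 < q) by (apply Rdiv_lt_0_compat; lra).
  pose proof (Rpower_pos q z).
  assert (E : gauss_seq z (S m) = gauss_seq z m * ((INR m + 1) / (Rpower q z * (z + (INR m + 1))))).
  { unfold gauss_seq. fold (P m).
    change (prod_f_R0 (fun k => z + INR k) (S m)) with (P m * (z + INR (S m))).
    assert (Em : Rpower (INR m) z = Rpower (INR m + 1) z * Rpower q z).
    { rewrite Rpower_mult_distr by lra. f_equal. unfold q. field. lra. }
    rewrite fact_simpl, mult_INR, !S_INR, Em.
    pose proof (Rpower_pos (INR m + 1) z). field. repeat split; lra. }
  rewrite E. rewrite <- (Rmult_1_r (gauss_seq z m)) at 1.
  apply Rmult_le_compat_l; [apply gauss_seq_nonneg|].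
  assert (B := Rpower_le_tangent z q Hz Hq).
  replace (q - 1) with (- / (INR m + 1)) in B by (unfold q; field; lra).
  assert (Rpower q z * (z + (INR m + 1)) <= INR m + 1 - z * z / (INR m + 1)).
  { apply Rle_trans with ((1 + z * - / (INR m + 1)) * (z + (INR m + 1))).
    - apply Rmult_le_compat_r; lra.
    - right. field. lra. }
  assert (0 <= z * z / (INR m + 1)) by (apply Rmult_le_pos; [nra|left; apply Rinv_0_lt_compat; lra]).
  apply (Rmult_le_reg_r (Rpower q z * (z + (INR m + 1)))); [nra|].
  unfold Rdiv at 1. rewrite Rmult_assoc, Rinv_l, Rmult_1_r by nra. lra.
Qed.

(* A majorant of [gauss_seq z], decreasing from [1 / z] by Bernoulli's inequality. *)
Let w n := INR (fact n) * Rpower (INR (S n)) z / P n.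

Let w_le_inv n : w n <= / z.
Proof.
  induction n as [|n IH].
  - unfold w, P. simpl. rewrite Rpower_1_base. right. field. lra.
  - eapply Rle_trans; [|exact IH].
    pose proof (P_pos n). pose proof (pos_INR n). pose proof (lt_0_INR _ (lt_O_fact n)).
    set (q := (INR n + 1 + 1) / (INR n + 1)).
    assert (Hq : 0 < q) by (apply Rdiv_lt_0_compat; lra).
    assert (E : w (S n) = w n * ((INR n + 1) * Rpower q z / (z + (INR n + 1)))).
    { unfold w. rewrite fact_simpl, mult_INR.
      change (P (S n)) with (P n * (z + INR (S n))). rewrite !S_INR.
      assert (En : Rpower (INR n + 1 + 1) z = Rpower (INR n + 1) z * Rpower q z).
      { rewrite Rpower_mult_distr by lra. f_equal. unfold q. field. lra. }
      rewrite En. pose proof (Rpower_pos (INR n + 1) z). field. lra. }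
    rewrite E.
    assert (B := Rpower_le_tangent z q Hz Hq).
    replace (q - 1) with (/ (INR n + 1)) in B by (unfold q; field; lra).
    assert (0 <= w n).
    { unfold w. pose proof (Rpower_pos (INR (S n)) z).
      apply Rmult_le_pos; [nra|left; apply Rinv_0_lt_compat; lra]. }
    rewrite <- (Rmult_1_r (w n)) at 2. apply Rmult_le_compat_l; [lra|].
    apply (Rmult_le_reg_r (z + (INR n + 1))); [lra|].
    unfold Rdiv. rewrite Rmult_assoc, Rinv_l, Rmult_1_r by lra.
    replace (1 * (z + (INR n + 1))) with ((INR n + 1) * (1 + z * / (INR n + 1))) by (field; lra).
    apply Rmult_le_compat_l; lra.
Qed.

Lemma gauss_seq_le_inv n : gauss_seq z n <= / z.
Proof.
  apply Rle_trans with (w n); [|apply w_le_inv].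
  unfold gauss_seq, w. fold (P n).
  pose proof (P_pos n). pose proof (lt_0_INR _ (lt_O_fact n)).
  apply Rmult_le_compat_r; [left; apply Rinv_0_lt_compat; lra|].
  apply Rmult_le_compat_l; [lra|].
  destruct n as [|n].
  - (* junk value: [Rpower 0 z = 1], since [ln 0 = 0] *)
    simpl INR. rewrite Rpower_1_base. unfold Rpower.
    replace (ln 0) with 0
      by (unfold ln; case Rlt_dec; [intro Hlt; destruct (Rlt_irrefl _ Hlt)|reflexivity]).
    rewrite Rmult_0_r, exp_0. lra.
  - apply Rle_Rpower_l; [lra|]. rewrite !S_INR. pose proof (pos_INR n). lra.
Qed.

Lemma gauss_seq_cv : exists L, Un_cv (gauss_seq z) L.
Proof.
  destruct (growing_cv (fun n => gauss_seq z (S n))) as [L HL].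
  - intro n. apply gauss_seq_incr. lia.
  - exists (/ z). intros r [i ->]. apply gauss_seq_le_inv.
  - exists L. intros eps Heps. destruct (HL eps Heps) as [N HN]. exists (S N).
    intros [|n] Hn; [lia|]. apply HN. lia.
Qed.

End GaussSequence.

Lemma inv_Gamma_recurrences a : 0 < a < 1 ->
  / Gamma (1 - a) = (1 - a) / Gamma (2 - a) /\
  / Gamma (- a) = (1 - a) * (- a) / Gamma (2 - a).
Proof.
  intros Ha.
  destruct (gauss_seq_cv (1 - a) ltac:(lra)) as [L HL].
  assert (H2 := gauss_lim_succ (1 - a) L ltac:(intro k; pose proof (pos_INR k); lra) HL).
  assert (H0 : Un_cv (gauss_seq (- a)) (L * / - a)).
  { apply gauss_lim_pred.
    - intros [|k]; [simpl; lra|]. rewrite S_INR. pose proof (pos_INR k). lra.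
    - replace (- a + 1) with (1 - a) by ring. exact HL. }
  replace (1 - a + 1) with (2 - a) in H2 by ring.
  rewrite (Gamma_of_lim _ _ H2), (Gamma_of_lim _ _ H0), (Gamma_of_lim _ _ HL).
  unfold Rdiv. rewrite !Rinv_mult, !Rinv_inv. generalize (/ L). intro. split; field; lra.
Qed.

(** * Taylor expansions of real powers *)

Lemma increment_le_of_derive_le (phi psi dphi dpsi : R -> R) a b : a <= b ->
  (forall t, a <= t <= b -> is_derive phi t (dphi t)) ->
  (forall t, a <= t <= b -> is_derive psi t (dpsi t)) ->
  (forall t, a <= t <= b -> Rabs (dphi t) <= dpsi t) ->
  Rabs (phi b - phi a) <= psi b - psi a.
Proof.
  intros Hab Hphi Hpsi Hd.
  destruct (Req_dec a b) as [<-|Hne]; [rewrite !Rminus_diag, Rabs_R0; lra|].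
  destruct (MVT_cor2 (fun t => phi t - psi t) (fun t => dphi t - dpsi t) a b ltac:(lra)) as [c1 [E1 H1]].
  { intros c Hc. apply is_derive_Reals, (is_derive_minus phi psi); auto. }
  destruct (MVT_cor2 (fun t => phi t + psi t) (fun t => dphi t + dpsi t) a b ltac:(lra)) as [c2 [E2 H2]].
  { intros c Hc. apply is_derive_Reals, (is_derive_plus phi psi); auto. }
  pose proof (proj1 (Rabs_le_between _ _) (Hd c1 ltac:(lra))).
  pose proof (proj1 (Rabs_le_between _ _) (Hd c2 ltac:(lra))).
  apply Rabs_le. split; nra.
Qed.

Definition taylor_sum (c : nat -> R) (m : nat) (t : R) : R :=
  sum_lt (fun i => c i * t ^ i / INR (fact i)) m.

Lemma taylor_sum_ext c d m t : (forall i, c i = d i) -> taylor_sum c m t = taylor_sum d m t.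
Proof. intro E. apply sum_lt_ext. intros. rewrite E. reflexivity. Qed.

Lemma taylor_sum_at_0 c m : taylor_sum c (S m) 0 = c 0%nat.
Proof.
  induction m as [|m IH]; [unfold taylor_sum; simpl; field|].
  change (taylor_sum c (S m) 0 + c (S m) * 0 ^ S m / INR (fact (S m)) = c 0%nat).
  rewrite IH, pow_i by lia. unfold Rdiv. ring.
Qed.

Lemma is_derive_taylor_sum c m t :
  is_derive (taylor_sum c (S m)) t (taylor_sum (fun i => c (S i)) m t).
Proof.
  induction m as [|m IH].
  - unfold taylor_sum; simpl. auto_derive; [easy|ring].
  - apply (is_derive_ext (fun t => taylor_sum c (S m) t + c (S m) * t ^ S m / INR (fact (S m))));
      [reflexivity|].
    replace (taylor_sum (fun i => c (S i)) (S m) t)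
      with (taylor_sum (fun i => c (S i)) m t + c (S m) * (INR (S m) * t ^ m) / INR (fact (S m))).
    + apply (is_derive_plus _ _ _ _ _ IH). auto_derive; [easy|].
      change (match m with 0%nat => 1 | S _ => INR m + 1 end) with (INR (S m)).
      change (fact m + m * fact m)%nat with (fact (S m)). unfold Rdiv. ring.
    + change (taylor_sum (fun i => c (S i)) (S m) t)
        with (taylor_sum (fun i => c (S i)) m t + c (S m) * t ^ m / INR (fact m)).
      rewrite fact_simpl, mult_INR. field. split; [apply INR_fact_neq_0|apply not_0_INR; lia].
Qed.

Lemma taylor_bound (f : nat -> R -> R) m s B :
  (forall i t, (i < m)%nat -> 0 <= t <= s -> is_derive (f i) t (f (S i) t)) ->
  (forall t, 0 <= t <= s -> Rabs (f m t) <= B) ->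
  forall t, 0 <= t <= s ->
  Rabs (f 0%nat t - taylor_sum (fun i => f i 0) m t) <= B * t ^ m / INR (fact m).
Proof.
  revert f. induction m as [|m IH]; intros f Hd HB t Ht.
  - simpl. rewrite Rminus_0_r. unfold Rdiv. rewrite Rinv_1, !Rmult_1_r. apply HB. exact Ht.
  - assert (IHf := IH (fun i => f (S i)) ltac:(intros i u Hi Hu; apply Hd; [lia|lra]) HB).
    assert (Hphi0 : f 0%nat 0 - taylor_sum (fun i => f i 0) (S m) 0 = 0)
      by (rewrite taylor_sum_at_0; ring).
    assert (Hpsi0 : B * 0 ^ S m / INR (fact (S m)) = 0) by (rewrite pow_i by lia; unfold Rdiv; ring).
    replace (f 0%nat t - _) with
      (f 0%nat t - taylor_sum (fun i => f i 0) (S m) t - (f 0%nat 0 - taylor_sum (fun i => f i 0) (S m) 0))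
      by (rewrite Hphi0; ring).
    replace (B * t ^ S m / _) with (B * t ^ S m / INR (fact (S m)) - B * 0 ^ S m / INR (fact (S m)))
      by (rewrite Hpsi0; ring).
    apply (increment_le_of_derive_le (fun u => f 0%nat u - taylor_sum (fun i => f i 0) (S m) u)
             (fun u => B * u ^ S m / INR (fact (S m)))
             (fun u => f 1%nat u - taylor_sum (fun i => f (S i) 0) m u)
             (fun u => B * u ^ m / INR (fact m))); [lra| | |].
    + intros u Hu. apply (is_derive_minus (f 0%nat)); [apply Hd; [lia|lra]|apply is_derive_taylor_sum].
    + intros u Hu. auto_derive; [easy|].
      change (match m with 0%nat => 1 | S _ => INR m + 1 end) with (INR (S m)).
      change (fact m + m * fact m)%nat with (fact (S m)).
      rewrite fact_simpl, mult_INR. field. split; [apply INR_fact_neq_0|apply not_0_INR; lia].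
    + intros u Hu. apply IHf. lra.
Qed.

Fixpoint falling (a : R) (i : nat) : R :=
  match i with O => 1 | S i => falling a i * (a - INR i) end.

Definition power_deriv (a u e : R) (i : nat) (t : R) : R :=
  e ^ i * falling a i * Rpower (u + e * t) (a - INR i).

Lemma is_derive_power_deriv a u e i t : 0 < u + e * t ->
  is_derive (power_deriv a u e i) t (power_deriv a u e (S i) t).
Proof.
  intro Hpos. unfold power_deriv.
  auto_derive; [eexists; apply is_derive_Rpower, Hpos|].
  rewrite Derive_Rpower by exact Hpos.
  rewrite S_INR. replace (a - INR i - 1) with (a - (INR i + 1)) by ring. cbn [pow falling]. ring.
Qed.

Lemma Rpower_taylor a u e m : 0 <= a <= INR m -> 2 <= u -> Rabs e <= 1 ->
  Rabs (Rpower (u + e) a - taylor_sum (fun i => e ^ i * falling a i * Rpower u (a - INR i)) m 1)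
  <= Rabs (falling a m) * 2 ^ m * Rpower u (a - INR m) / INR (fact m).
Proof.
  intros Ha Hu He.
  assert (Hnear : forall t, 0 <= t <= 1 -> u / 2 <= u + e * t).
  { intros t Ht. pose proof (Rabs_le_between e 1) as [Hb _]. specialize (Hb He). nra. }
  assert (Hbound : forall t, 0 <= t <= 1 ->
    Rabs (power_deriv a u e m t) <= Rabs (falling a m) * 2 ^ m * Rpower u (a - INR m)).
  { intros t Ht. unfold power_deriv.
    rewrite !Rabs_mult, <- RPow_abs, (Rabs_pos_eq (Rpower _ _)) by (left; apply Rpower_pos).
    assert (Rabs e ^ m <= 1) by (rewrite <- (pow1 m); apply pow_incr; split; [apply Rabs_pos|exact He]).
    assert (Rpower (u + e * t) (a - INR m) <= 2 ^ m * Rpower u (a - INR m))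
      by (apply Rpower_le_at_half; [lra|lra|lra|apply Hnear, Ht]).
    pose proof (pow_le _ m (Rabs_pos e)). pose proof (Rabs_pos (falling a m)).
    pose proof (Rpower_pos (u + e * t) (a - INR m)).
    apply Rle_trans with (1 * Rabs (falling a m) * (2 ^ m * Rpower u (a - INR m))); [|right; ring].
    apply Rmult_le_compat; [apply Rmult_le_pos; lra|lra| |lra].
    apply Rmult_le_compat_r; lra. }
  assert (B := taylor_bound (power_deriv a u e) m 1 _
    (fun i t _ Ht => is_derive_power_deriv a u e i t ltac:(pose proof (Hnear t Ht); lra)) Hbound).
  specialize (B 1 ltac:(lra)).
  rewrite pow1, Rmult_1_r in B. unfold power_deriv at 1 in B.
  rewrite Rmult_1_r, Rminus_0_r in B. simpl in B. rewrite !Rmult_1_l in B.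
  rewrite (taylor_sum_ext _ (fun i => e ^ i * falling a i * Rpower u (a - INR i))) in B.
  - rewrite Rmult_1_r in B. exact B.
  - intro i. unfold power_deriv. rewrite Rmult_0_r, Rplus_0_r. reflexivity.
Qed.

Lemma Rpower_backward_diff a n : 0 < a < 1 -> 2 <= n ->
  Rabs (Rpower (n - 1) a - Rpower n a + a * Rpower n (a - 1) - a * (a - 1) / 2 * Rpower n (a - 2))
  <= 3 * Rpower n (a - 3).
Proof.
  intros Ha Hn.
  assert (T := Rpower_taylor a n (-1) 3 ltac:(simpl; lra) Hn ltac:(rewrite Rabs_left by lra; lra)).
  set (r := Rabs (falling a 3) * 2 ^ 3 * Rpower n (a - INR 3) / INR (fact 3)) in T.
  assert (Hr : r <= 3 * Rpower n (a - 3)).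
  { assert (Hf : Rabs (falling a 3) <= 2).
    { simpl. replace (a - 0) with a by ring. replace (a - (1 + 1)) with (a - 2) by ring.
      rewrite !Rabs_mult, Rabs_R1, (Rabs_pos_eq a), (Rabs_left (a - 1)), (Rabs_left (a - 2)) by lra. nra. }
    unfold r. replace (INR (fact 3)) with 6 by (simpl; ring). replace (INR 3) with 3 by (simpl; ring).
    pose proof (Rpower_pos n (a - 3)).
    apply Rle_trans with (2 * 2 ^ 3 * Rpower n (a - 3) / 6); [|lra].
    unfold Rdiv. repeat apply Rmult_le_compat_r; lra. }
  unfold taylor_sum in T. simpl in T.
  replace (n + -1) with (n - 1) in T by ring.
  replace (a - 0) with a in T by ring. replace (a - (1 + 1)) with (a - 2) in T by ring.
  match type of T with Rabs ?Y <= _ => match goal with |- Rabs ?X <= _ =>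
    replace X with Y by field end end.
  lra.
Qed.

Lemma Rpower_second_diff a k : 0 < a < 1 -> 2 <= k ->
  Rabs (Rpower (k - 1) a - 2 * Rpower k a + Rpower (k + 1) a - a * (a - 1) * Rpower k (a - 2))
  <= 8 * Rpower k (a - 4).
Proof.
  intros Ha Hk.
  assert (Tp := Rpower_taylor a k 1 4 ltac:(simpl; lra) Hk ltac:(rewrite Rabs_R1; lra)).
  assert (Tm := Rpower_taylor a k (-1) 4 ltac:(simpl; lra) Hk ltac:(rewrite Rabs_left by lra; lra)).
  set (r := Rabs (falling a 4) * 2 ^ 4 * Rpower k (a - INR 4) / INR (fact 4)) in Tp, Tm.
  assert (Hr : r <= 4 * Rpower k (a - 4)).
  { assert (Hf : Rabs (falling a 4) <= 6).
    { simpl. replace (a - 0) with a by ring. replace (a - (1 + 1)) with (a - 2) by ring.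
      replace (a - (1 + 1 + 1)) with (a - 3) by ring.
      rewrite !Rabs_mult, Rabs_R1, (Rabs_pos_eq a), (Rabs_left (a - 1)), (Rabs_left (a - 2)),
        (Rabs_left (a - 3)) by lra.
      assert (0 <= a * - (a - 1) <= 1) by nra. assert (0 <= a * - (a - 1) * - (a - 2) <= 2) by nra. nra. }
    unfold r. replace (INR (fact 4)) with 24 by (simpl; ring). replace (INR 4) with 4 by (simpl; ring).
    pose proof (Rpower_pos k (a - 4)).
    apply Rle_trans with (6 * 2 ^ 4 * Rpower k (a - 4) / 24); [|lra].
    unfold Rdiv. repeat apply Rmult_le_compat_r; lra. }
  unfold taylor_sum in Tp, Tm. simpl in Tp, Tm.
  replace (k + -1) with (k - 1) in Tm by ring.
  replace (a - 0) with a in Tp, Tm by ring.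
  replace (a - (1 + 1)) with (a - 2) in Tp, Tm by ring.
  replace (a - (1 + 1 + 1)) with (a - 3) in Tp, Tm by ring.
  match type of Tp with Rabs ?Yp <= _ => match type of Tm with Rabs ?Ym <= _ =>
    match goal with |- Rabs ?X <= _ => replace X with (Yp + Ym) by field end end end.
  eapply Rle_trans; [apply Rabs_triang|]. lra.
Qed.

(** * The L1 scheme for the Caputo integral *)

(* [caputo_kernel_prim al x x = 0] by the convention [rpow 0 _ = 0]. *)
Definition caputo_kernel (al x t : R) : R := / rpow (x - t) al.
Definition caputo_kernel_prim (al x t : R) : R := - rpow (x - t) (1 - al) / (1 - al).
Definition caputo_integrand (y1 : R -> R) (al x t : R) : R := y1 t / rpow (x - t) al.
Definition caputo_integrand_reg (y1 : R -> R) (al x t : R) : R := (y1 t - y1 x) / rpow (x - t) al.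

Lemma caputo_kernel_eq al x t : t < x -> caputo_kernel al x t = Rpower (x - t) (- al).
Proof. intro Ht. unfold caputo_kernel. rewrite rpow_pos_eq, Rpower_Ropp by lra. reflexivity. Qed.

Lemma caputo_kernel_incr al x a b : 0 < al -> a <= b -> b < x ->
  caputo_kernel al x a <= caputo_kernel al x b.
Proof. intros Hal Hab Hb. rewrite !caputo_kernel_eq by lra. apply Rpower_antitone_l; lra. Qed.

Lemma caputo_kernel_prim_sub al x c : 0 < al < 1 -> c < x ->
  caputo_kernel_prim al x x - caputo_kernel_prim al x c = Rpower (x - c) (1 - al) / (1 - al).
Proof.
  intros Hal Hc. unfold caputo_kernel_prim.
  rewrite rpow_nonpos, rpow_pos_eq by lra. field. lra.
Qed.

Lemma caputo_integrand_reg_at_x y1 al x t : x <= t -> caputo_integrand_reg y1 al x t = 0.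
Proof.
  intro Ht. unfold caputo_integrand_reg. rewrite rpow_nonpos by lra. unfold Rdiv. rewrite Rinv_0. ring.
Qed.

Lemma continuous_caputo_kernel al x t : t < x -> continuous (caputo_kernel al x) t.
Proof.
  intro Ht.
  apply (continuous_ext_loc _ (fun s => Rpower (x - s) (- al))).
  - apply (filter_imp (fun s => s < x)); [|exact (open_lt x t Ht)].
    intros s Hs. symmetry. apply caputo_kernel_eq, Hs.
  - apply (ex_derive_continuous (fun s => Rpower (x - s) (- al))).
    auto_derive. eexists. apply is_derive_Rpower. lra.
Qed.

Lemma is_derive_caputo_kernel_prim al x t : 0 < al < 1 -> t < x ->
  is_derive (caputo_kernel_prim al x) t (caputo_kernel al x t).
Proof.
  intros Hal Ht.
  apply (is_derive_ext_loc (fun s => - Rpower (x - s) (1 - al) / (1 - al))).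
  - apply (filter_imp (fun s => s < x)); [|exact (open_lt x t Ht)].
    intros s Hs. unfold caputo_kernel_prim. rewrite rpow_pos_eq by lra. reflexivity.
  - rewrite caputo_kernel_eq by exact Ht.
    auto_derive; [eexists; apply is_derive_Rpower; lra|].
    replace (x + - t) with (x - t) by ring. rewrite Derive_Rpower by lra.
    replace (1 - al - 1) with (- al) by ring. field. lra.
Qed.

Lemma is_RInt_caputo_kernel al x a b : 0 < al < 1 -> a <= b -> b < x ->
  is_RInt (caputo_kernel al x) a b (caputo_kernel_prim al x b - caputo_kernel_prim al x a).
Proof.
  intros Hal Hab Hb.
  apply (is_RInt_derive (caputo_kernel_prim al x));
    intros t Ht; rewrite Rmin_left, Rmax_right in Ht by lra.
  - apply is_derive_caputo_kernel_prim; lra.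
  - apply continuous_caputo_kernel; lra.
Qed.

Section L1Scheme.

Variables (al x M2 : R) (y y1 y2 : R -> R).
Hypothesis Hal : 0 < al < 1.
Hypothesis Hx : 0 < x.
Hypothesis Hy1 : forall t, 0 <= t <= x -> is_derive y t (y1 t).
Hypothesis Hy2 : forall t, 0 <= t <= x -> is_derive y1 t (y2 t).
Hypothesis HM2 : forall t, 0 <= t <= x -> Rabs (y2 t) <= M2.

Let M2_ge0 : 0 <= M2.
Proof. apply Rle_trans with (Rabs (y2 0)); [apply Rabs_pos|apply HM2; lra]. Qed.

Let f := caputo_integrand y1 al x.
Let g := caputo_integrand_reg y1 al x.
Let W := caputo_kernel_prim al x.
Let k := caputo_kernel al x.

Lemma y1_lipschitz s t : 0 <= s <= t -> t <= x -> Rabs (y1 t - y1 s) <= M2 * (t - s).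
Proof.
  intros Hs Ht. replace (M2 * (t - s)) with (M2 * t - M2 * s) by ring.
  apply (increment_le_of_derive_le y1 (fun u => M2 * u) y2 (fun _ => M2)); [lra| | |].
  - intros u Hu. apply Hy2. lra.
  - intros u Hu. auto_derive; [easy|ring].
  - intros u Hu. apply HM2. lra.
Qed.

Lemma y1_near_diff_quot a b t : 0 <= a < b -> b <= x -> a <= t <= b ->
  Rabs (y1 t - (y b - y a) / (b - a)) <= M2 * (b - a).
Proof.
  intros Hab Hb Ht.
  destruct (MVT_cor2 y y1 a b ltac:(lra)) as [c [Ec Hc]].
  { intros c Hc. apply is_derive_Reals, Hy1. lra. }
  replace ((y b - y a) / (b - a)) with (y1 c) by (rewrite Ec; field; lra).
  destruct (Rle_dec c t).
  - eapply Rle_trans; [apply y1_lipschitz; lra|]. apply Rmult_le_compat_l; [exact M2_ge0|lra].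
  - rewrite <- Rabs_Ropp, Ropp_minus_distr.
    eapply Rle_trans; [apply y1_lipschitz; lra|]. apply Rmult_le_compat_l; [exact M2_ge0|lra].
Qed.

Lemma continuous_y1 t : 0 <= t <= x -> continuous y1 t.
Proof. intro Ht. apply (ex_derive_continuous y1). eexists. apply Hy2, Ht. Qed.

Lemma is_RInt_y1 a b : 0 <= a <= b -> b <= x -> is_RInt y1 a b (y b - y a).
Proof.
  intros Hab Hb. apply (is_RInt_derive y y1); intros t Ht; rewrite Rmin_left, Rmax_right in Ht by lra.
  - apply Hy1. lra.
  - apply continuous_y1. lra.
Qed.

Lemma ex_RInt_caputo_integrand a b : 0 <= a <= b -> b < x -> ex_RInt f a b.
Proof.
  intros Hab Hb. apply (ex_RInt_continuous (V := R_CompleteNormedModule)).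
  intros t Ht. rewrite Rmin_left, Rmax_right in Ht by lra.
  apply (continuous_mult y1 (caputo_kernel al x));
    [apply continuous_y1|apply continuous_caputo_kernel]; lra.
Qed.

Lemma caputo_integrand_reg_bound t : 0 <= t < x -> Rabs (g t) <= M2 * Rpower (x - t) (1 - al).
Proof.
  intro Ht. unfold g, caputo_integrand_reg, Rdiv.
  rewrite rpow_pos_eq, <- Rpower_Ropp by lra.
  rewrite Rabs_mult, (Rabs_pos_eq (Rpower _ _)) by (left; apply Rpower_pos).
  replace (1 - al) with (1 + - al) by ring. rewrite <- Rpower_1_plus, <- Rmult_assoc by lra.
  apply Rmult_le_compat_r; [left; apply Rpower_pos|].
  rewrite <- Rabs_Ropp, Ropp_minus_distr. apply y1_lipschitz; lra.
Qed.

Lemma continuous_caputo_integrand_reg t : 0 <= t <= x -> continuous g t.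
Proof.
  intro Ht. destruct (Req_dec t x) as [->|Hne].
  - apply continuity_pt_filterlim. intros eps Heps.
    destruct (Rpower_small (1 - al) (eps / (M2 + 1)) ltac:(lra) ltac:(apply Rdiv_lt_0_compat; lra))
      as [d [Hd Hs]].
    exists (Rmin d x). split; [apply Rmin_pos; lra|].
    intros t [_ Ht']. simpl in Ht' |- *. unfold R_dist in Ht' |- *.
    unfold g. rewrite (caputo_integrand_reg_at_x y1 al x x), Rminus_0_r by lra.
    apply Rabs_def2 in Ht'. pose proof (Rmin_l d x). pose proof (Rmin_r d x).
    destruct (Rle_dec x t).
    + rewrite caputo_integrand_reg_at_x, Rabs_R0 by lra. lra.
    + eapply Rle_lt_trans; [apply caputo_integrand_reg_bound; lra|].
      specialize (Hs (x - t) ltac:(lra)).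
      apply Rle_lt_trans with (M2 * (eps / (M2 + 1))); [apply Rmult_le_compat_l; lra|].
      apply (Rmult_lt_reg_r (M2 + 1)); [lra|].
      replace (M2 * (eps / (M2 + 1)) * (M2 + 1)) with (M2 * eps) by (field; lra). nra.
  - apply (continuous_ext (fun s => (y1 s - y1 x) * caputo_kernel al x s)); [reflexivity|].
    apply (continuous_mult (fun s => y1 s - y1 x)); [|apply continuous_caputo_kernel; lra].
    apply (continuous_minus y1 (fun _ => y1 x)); [apply continuous_y1; lra|apply continuous_const].
Qed.

Lemma ex_RInt_caputo_integrand_reg a b : 0 <= a <= b -> b <= x -> ex_RInt g a b.
Proof.
  intros Hab Hb. apply (ex_RInt_continuous (V := R_CompleteNormedModule)).
  intros t Ht. rewrite Rmin_left, Rmax_right in Ht by lra. apply continuous_caputo_integrand_reg. lra.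
Qed.

Lemma RInt_caputo_integrand_reg a b : 0 <= a <= b -> b < x ->
  RInt g a b = RInt f a b - y1 x * (W b - W a).
Proof.
  intros Hab Hb. apply is_RInt_unique.
  assert (I := is_RInt_minus _ _ _ _ _ _ (RInt_correct _ _ _ (ex_RInt_caputo_integrand a b Hab Hb))
                 (is_RInt_scal _ _ _ (y1 x) _ (is_RInt_caputo_kernel al x a b Hal ltac:(lra) Hb))).
  eapply is_RInt_ext; [|exact I].
  intros t _. unfold minus, scal, opp, plus; simpl; unfold mult; simpl.
  unfold f, g, caputo_integrand, caputo_integrand_reg, caputo_kernel, Rdiv. ring.
Qed.

Lemma RInt_caputo_integrand_reg_tail c : 0 <= c < x ->
  Rabs (RInt g c x) <= M2 * Rpower (x - c) (2 - al).
Proof.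
  intro Hc. replace (2 - al) with (1 + (1 - al)) by ring. rewrite <- Rpower_1_plus by lra.
  replace (M2 * (_ * _)) with ((x - c) * (M2 * Rpower (x - c) (1 - al))) by ring.
  apply abs_RInt_le_const; [lra|apply ex_RInt_caputo_integrand_reg; lra|].
  intros t Ht. destruct (Req_dec t x) as [->|Hne].
  - unfold g. rewrite caputo_integrand_reg_at_x, Rabs_R0 by lra.
    apply Rmult_le_pos; [lra|left; apply Rpower_pos].
  - eapply Rle_trans; [apply caputo_integrand_reg_bound; lra|].
    apply Rmult_le_compat_l; [lra|]. apply Rle_Rpower_l; lra.
Qed.

(* Subtracting [y1 x] removes the singularity: the tail over [c, x] becomes O((x - c)^(1 - al)). *)
Definition caputo_integral : R := RInt g 0 x + y1 x * (W x - W 0).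

Definition caputo_tail (c : R) : R := RInt g c x + y1 x * (W x - W c).

Lemma caputo_integral_split c : 0 <= c < x -> caputo_integral = RInt f 0 c + caputo_tail c.
Proof.
  intro Hc. unfold caputo_integral, caputo_tail.
  rewrite <- (RInt_Chasles g 0 c x) by (apply ex_RInt_caputo_integrand_reg; lra).
  change plus with Rplus. rewrite RInt_caputo_integrand_reg by lra. ring.
Qed.

Lemma improper_caputo_integral : improper_int_right (fun t => y1 t / rpow (x - t) al) 0 x caputo_integral.
Proof.
  intros eps Heps.
  set (K := M2 * x + Rabs (y1 x) / (1 - al) + 1).
  assert (HK : 0 < K).
  { assert (0 <= Rabs (y1 x) / (1 - al))
      by (apply Rmult_le_pos; [apply Rabs_pos|left; apply Rinv_0_lt_compat; lra]).
    unfold K. nra. }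
  destruct (Rpower_small (1 - al) (eps / K) ltac:(lra) ltac:(apply Rdiv_lt_0_compat; lra)) as [d [Hd Hs]].
  exists (Rmin d x). split; [apply Rmin_pos; lra|].
  intros c Hc0 Hc.
  assert (Hcd : 0 < x - c < d) by (pose proof (Rmin_l d x); lra).
  exists (ex_RInt_Reals_0 _ _ _ (ex_RInt_caputo_integrand 0 c ltac:(lra) ltac:(lra))).
  rewrite <- RInt_Reals. fold (caputo_integrand y1 al x). fold f.
  rewrite (caputo_integral_split c) by lra.
  replace (RInt f 0 c - (RInt f 0 c + caputo_tail c)) with (- caputo_tail c) by ring.
  rewrite Rabs_Ropp. unfold caputo_tail. eapply Rle_lt_trans; [apply Rabs_triang|].
  unfold W. rewrite caputo_kernel_prim_sub, Rabs_mult by lra.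
  rewrite (Rabs_pos_eq (_ / _))
    by (apply Rmult_le_pos; [left; apply Rpower_pos|left; apply Rinv_0_lt_compat; lra]).
  specialize (Hs (x - c) Hcd).
  assert (Htail := RInt_caputo_integrand_reg_tail c ltac:(lra)).
  replace (2 - al) with (1 + (1 - al)) in Htail by ring. rewrite <- Rpower_1_plus in Htail by lra.
  assert (Rpower (x - c) (1 - al) * K < eps).
  { apply (Rmult_lt_compat_r K) in Hs; [|lra].
    unfold Rdiv in Hs. rewrite Rmult_assoc, Rinv_l, Rmult_1_r in Hs by lra. exact Hs. }
  pose proof (Rpower_pos (x - c) (1 - al)).
  assert (M2 * ((x - c) * Rpower (x - c) (1 - al)) <= M2 * x * Rpower (x - c) (1 - al))
    by (rewrite <- Rmult_assoc; apply Rmult_le_compat_r; [lra|]; nra).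
  unfold K in *. unfold Rdiv in *. nra.
Qed.

(* Since [y1 - d] integrates to [0] over the cell, the error is [int_a^b (y1 - d)(k - k a)],
   and [k] is increasing: the bound telescopes over consecutive cells. *)
Lemma L1_cell_error a b : 0 <= a < b -> b < x ->
  Rabs (RInt f a b - (y b - y a) / (b - a) * (W b - W a)) <= M2 * (b - a) * (b - a) * (k b - k a).
Proof.
  intros Hab Hb.
  set (d := (y b - y a) / (b - a)).
  set (G := fun t => (y1 t - d) * (k t - k a)).
  assert (IG : is_RInt G a b (RInt f a b - d * (W b - W a))).
  { assert (I := is_RInt_plus _ _ _ _ _ _
      (is_RInt_minus _ _ _ _ _ _
        (is_RInt_minus _ _ _ _ _ _ (RInt_correct _ _ _ (ex_RInt_caputo_integrand a b ltac:(lra) Hb))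
          (is_RInt_scal _ _ _ d _ (is_RInt_caputo_kernel al x a b Hal ltac:(lra) Hb)))
        (is_RInt_scal _ _ _ (k a) _ (is_RInt_y1 a b ltac:(lra) ltac:(lra))))
      (is_RInt_const a b (d * k a))).
    replace (RInt f a b - d * (W b - W a)) with
      (plus (minus (minus (RInt f a b) (scal d (W b - W a))) (scal (k a) (y b - y a)))
            (scal (b - a) (d * k a))).
    - eapply is_RInt_ext; [|exact I]. intros t _.
      unfold G, minus, scal, opp, plus; simpl; unfold mult; simpl.
      unfold f, k, caputo_integrand, caputo_kernel, Rdiv. ring.
    - unfold minus, scal, opp, plus; simpl; unfold mult; simpl. unfold d. field. lra. }
  rewrite <- (is_RInt_unique _ _ _ _ IG).
  replace (M2 * (b - a) * (b - a) * (k b - k a)) with ((b - a) * (M2 * (b - a) * (k b - k a))) by ring.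
  apply abs_RInt_le_const; [lra|eexists; exact IG|].
  intros t Ht. unfold G. rewrite Rabs_mult.
  assert (k a <= k t) by (apply caputo_kernel_incr; lra).
  assert (k t <= k b) by (apply caputo_kernel_incr; lra).
  apply Rmult_le_compat; try apply Rabs_pos.
  - apply y1_near_diff_quot; lra.
  - rewrite Rabs_pos_eq; lra.
Qed.

Definition L1_cell (h : R) (j : nat) : R :=
  (y (INR (S j) * h) - y (INR j * h)) / h * (W (INR (S j) * h) - W (INR j * h)).

Lemma L1_partial_error h m : 0 < h -> INR m * h < x ->
  Rabs (RInt f 0 (INR m * h) - sum_lt (L1_cell h) m) <= M2 * h * h * (k (INR m * h) - k 0).
Proof.
  intro Hh. induction m as [|m IH]; intro Hm.
  - simpl INR. rewrite Rmult_0_l, RInt_point. change (@zero R_NormedModule) with 0.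
    simpl. rewrite !Rminus_diag, Rabs_R0, Rmult_0_r. lra.
  - rewrite S_INR in Hm |- *.
    assert (Hm0 : 0 <= INR m * h) by (apply Rmult_le_pos; [apply pos_INR|lra]).
    rewrite <- (RInt_Chasles f 0 (INR m * h)) by (apply ex_RInt_caputo_integrand; lra).
    change plus with Rplus. simpl sum_lt.
    assert (C := L1_cell_error (INR m * h) ((INR m + 1) * h) ltac:(nra) ltac:(lra)).
    replace ((INR m + 1) * h - INR m * h) with h in C by ring.
    unfold L1_cell at 2. rewrite S_INR.
    specialize (IH ltac:(lra)).
    match goal with |- Rabs (?A + ?B - (?C + ?D)) <= _ =>
      replace (A + B - (C + D)) with ((A - C) + (B - D)) by ring end.
    eapply Rle_trans; [apply Rabs_triang|]. lra.
Qed.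

Lemma L1_last_cell_error c : 0 <= c < x ->
  Rabs (caputo_tail c - (y x - y c) / (x - c) * (W x - W c))
  <= M2 * (1 + / (1 - al)) * Rpower (x - c) (2 - al).
Proof.
  intro Hc. unfold caputo_tail, W. rewrite caputo_kernel_prim_sub by lra.
  match goal with |- Rabs (?I + ?Y * ?P - ?D * ?P) <= _ =>
    replace (I + Y * P - D * P) with (I + (Y - D) * P) by ring end.
  eapply Rle_trans; [apply Rabs_triang|].
  assert (Hq : 0 < Rpower (x - c) (1 - al) / (1 - al))
    by (apply Rdiv_lt_0_compat; [apply Rpower_pos|lra]).
  rewrite Rabs_mult, (Rabs_pos_eq (_ / _)) by lra.
  pose proof (y1_near_diff_quot c x x ltac:(lra) ltac:(lra) ltac:(lra)).
  replace (M2 * (1 + / (1 - al)) * Rpower (x - c) (2 - al))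
    with (M2 * Rpower (x - c) (2 - al) + M2 * (x - c) * (Rpower (x - c) (1 - al) / (1 - al))).
  - apply Rplus_le_compat; [apply RInt_caputo_integrand_reg_tail; lra|].
    apply Rmult_le_compat_r; lra.
  - replace (2 - al) with (1 + (1 - al)) by ring. rewrite <- Rpower_1_plus by lra. field. lra.
Qed.

Lemma L1_error n h : (1 <= n)%nat -> 0 < h -> INR n * h = x ->
  Rabs (sum_lt (L1_cell h) n - caputo_integral) <= M2 * (2 + / (1 - al)) * Rpower h (2 - al).
Proof.
  intros Hn Hh Hnx.
  destruct n as [|m]; [lia|].
  assert (Em : INR m * h = x - h) by (rewrite S_INR in Hnx; lra).
  assert (Hm0 : 0 <= INR m * h) by (apply Rmult_le_pos; [apply pos_INR|lra]).
  assert (P := L1_partial_error h m Hh ltac:(lra)).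
  assert (L := L1_last_cell_error (x - h) ltac:(lra)).
  replace (x - (x - h)) with h in L by ring.
  rewrite (caputo_integral_split (x - h)) by lra.
  simpl sum_lt. unfold L1_cell at 2. rewrite Hnx, Em in *.
  match goal with |- Rabs (?S + ?D - (?I + ?T)) <= _ =>
    replace (S + D - (I + T)) with (- (I - S) - (T - D)) by ring end.
  eapply Rle_trans; [apply Rabs_triang|]. rewrite !Rabs_Ropp.
  replace (k (x - h)) with (Rpower h (- al)) in P
    by (unfold k; rewrite caputo_kernel_eq by lra; f_equal; ring).
  assert (0 < k 0) by (unfold k; rewrite caputo_kernel_eq by lra; apply Rpower_pos).
  assert (Hh2 : h * h * Rpower h (- al) = Rpower h (2 - al)).
  { replace (2 - al) with (1 + (1 + - al)) by ring. rewrite <- !Rpower_1_plus by lra. ring. }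
  assert (M2 * h * h * (Rpower h (- al) - k 0) <= M2 * Rpower h (2 - al)).
  { rewrite <- Hh2. assert (0 <= M2 * h * h) by (apply Rmult_le_pos; [apply Rmult_le_pos|]; lra). nra. }
  lra.
Qed.

End L1Scheme.

(** * The weights *)

Definition l1_weight (a : R) (n k : nat) : R :=
  if Nat.eqb k 0 then 1
  else if Nat.ltb k n then rpow (INR k - 1) a - 2 * rpow (INR k) a + rpow (INR k + 1) a
  else rpow (INR n - 1) a - rpow (INR n) a.

Definition rpow_incr (a : R) (m : nat) : R := rpow (INR m + 1) a - rpow (INR m) a.

(* Abel summation: the weights are the backward differences of [rpow_incr]. *)
Lemma l1_weight_summation_by_parts a p (z : nat -> R) :
  sum_f_R0 (fun k => l1_weight a (S p) k * z k) (S p)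
  = sum_lt (fun m => rpow_incr a m * (z m - z (S m))) (S p).
Proof.
  revert z. induction p as [|p IH]; intro z.
  - simpl. unfold l1_weight, rpow_incr. simpl.
    replace (1 - 1) with 0 by ring. replace (0 + 1) with 1 by ring. rewrite rpow0, rpow1. ring.
  - change (sum_f_R0 (fun k => l1_weight a (S (S p)) k * z k) (S (S p))) with
      (sum_f_R0 (fun k => l1_weight a (S (S p)) k * z k) p
       + l1_weight a (S (S p)) (S p) * z (S p) + l1_weight a (S (S p)) (S (S p)) * z (S (S p))).
    rewrite (sum_eq _ (fun k => l1_weight a (S p) k * z k)).
    2:{ intros i Hi. unfold l1_weight. destruct (Nat.eqb i 0); [reflexivity|].
        rewrite (proj2 (Nat.ltb_lt i (S (S p)))), (proj2 (Nat.ltb_lt i (S p))) by lia. reflexivity. }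
    assert (E := IH z). simpl sum_f_R0 in E |- *.
    change (sum_lt (fun m => rpow_incr a m * (z m - z (S m))) (S (S p))) with
      (sum_lt (fun m => rpow_incr a m * (z m - z (S m))) (S p)
       + rpow_incr a (S p) * (z (S p) - z (S (S p)))).
    rewrite <- E. unfold l1_weight. simpl Nat.eqb.
    rewrite (proj2 (Nat.ltb_lt (S p) (S (S p)))), (proj2 (Nat.ltb_ge (S p) (S p))),
      (proj2 (Nat.ltb_ge (S (S p)) (S (S p)))) by lia.
    unfold rpow_incr. replace (INR (S (S p)) - 1) with (INR (S p)) by (rewrite (S_INR (S p)); ring).
    rewrite (S_INR (S p)). ring.
Qed.

Lemma L1_cell_sum al x y h n : 0 < al < 1 -> 0 < h -> (1 <= n)%nat -> INR n * h = x ->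
  sum_lt (L1_cell al x y h) n
  = Rpower h (- al) / (1 - al) * sum_f_R0 (fun k => l1_weight (1 - al) n k * y (INR (n - k) * h)) n.
Proof.
  intros Hal Hh Hn Hx.
  set (z := fun k => y (INR (n - k) * h)).
  change (fun k => l1_weight (1 - al) n k * y (INR (n - k) * h))
    with (fun k => l1_weight (1 - al) n k * z k).
  destruct n as [|p]; [lia|].
  rewrite l1_weight_summation_by_parts, sum_lt_rev, <- sum_lt_scal.
  apply sum_lt_ext. intros j Hj.
  unfold L1_cell, caputo_kernel_prim, rpow_incr, z.
  replace (S p - j)%nat with (S (S p - 1 - j)) by lia.
  replace (S p - S j)%nat with (S p - 1 - j)%nat by lia.
  assert (E1 : x - INR (S (S p - 1 - j)) * h = INR j * h).
  { replace (INR (S (S p - 1 - j))) with (INR (S p) - INR j) by (rewrite <- minus_INR by lia; f_equal; lia).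
    rewrite <- Hx. ring. }
  assert (E2 : x - INR (S p - 1 - j) * h = (INR j + 1) * h).
  { replace (INR (S p - 1 - j)) with (INR (S p) - INR (S j)) by (rewrite <- minus_INR by lia; f_equal; lia).
    rewrite <- Hx, (S_INR j). ring. }
  rewrite E1, E2, !rpow_mult_pos by (try apply pos_INR; pose proof (pos_INR j); lra).
  replace (1 - al) with (1 + - al) by ring. rewrite <- Rpower_1_plus by lra.
  field. lra.
Qed.

Lemma ceil5_ge N : (N <= 5 * ceil5 N)%nat.
Proof.
  unfold ceil5. pose proof (Nat.div_mod (N + 4) 5 ltac:(lia)).
  pose proof (Nat.mod_upper_bound (N + 4) 5 ltac:(lia)). lia.
Qed.

Lemma ceil5_le_INR N k : (ceil5 N <= k)%nat -> INR N <= 5 * INR k.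
Proof.
  intro Hk. pose proof (ceil5_ge N).
  replace 5 with (INR 5) by (simpl; ring). rewrite <- mult_INR. apply le_INR. lia.
Qed.

Definition sigma_bar_defect (al : R) (N n k : nat) : R :=
  sigma_bar al N n k - l1_weight (1 - al) n k / Gamma (2 - al).

Lemma scheme_decomposition al x y N n h : 0 < al < 1 -> 0 < h -> (1 <= n)%nat -> INR n * h = x ->
  / Rpower h al * sum_f_R0 (fun k => sigma_bar al N n k * y (INR (n - k) * h)) n
  = sum_lt (L1_cell al x y h) n / Gamma (1 - al)
    + / Rpower h al * sum_f_R0 (fun k => sigma_bar_defect al N n k * y (INR (n - k) * h)) n.
Proof.
  intros Hal Hh Hn Hx.
  rewrite (sum_eq _ (fun k => l1_weight (1 - al) n k * y (INR (n - k) * h) * / Gamma (2 - al)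
                              + sigma_bar_defect al N n k * y (INR (n - k) * h)))
    by (intros; unfold sigma_bar_defect, Rdiv; ring).
  rewrite plus_sum, <- scal_sum, L1_cell_sum by assumption.
  destruct (inv_Gamma_recurrences al Hal) as [G1 _].
  unfold Rdiv in G1 |- *. rewrite G1, Rpower_Ropp.
  generalize (/ Rpower h al) (/ Gamma (2 - al)). intros. field. lra.
Qed.

Lemma sigma_bar_defect_head al N n k : (k <= n)%nat -> (k <= ceil5 N)%nat -> sigma_bar_defect al N n k = 0.
Proof.
  intros Hkn HkK. unfold sigma_bar_defect, sigma_bar, l1_weight.
  destruct (Nat.eqb k 0); [unfold Rdiv; ring|].
  destruct (Nat.ltb k n) eqn:E.
  - rewrite (proj2 (Nat.leb_le k (ceil5 N))) by lia. unfold Rdiv. ring.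
  - apply Nat.ltb_ge in E. rewrite (proj2 (Nat.leb_le n (ceil5 N))) by lia. unfold Rdiv. ring.
Qed.

Lemma sigma_bar_defect_interior al N n k : 0 < al < 1 -> (ceil5 N < k)%nat -> (k < n)%nat -> (2 <= k)%nat ->
  Rabs (sigma_bar_defect al N n k)
  <= (8 * Rabs (/ Gamma (2 - al)) + Rabs (/ Gamma (-2 - al))) * Rpower (INR k) (- al - 3).
Proof.
  intros Hal HK Hkn Hk2.
  destruct (inv_Gamma_recurrences al Hal) as [_ G0].
  assert (Hk : 2 <= INR k) by (apply (le_INR 2); lia).
  unfold sigma_bar_defect, sigma_bar, l1_weight.
  rewrite (proj2 (Nat.eqb_neq k 0)), (proj2 (Nat.ltb_lt k n)), (proj2 (Nat.leb_gt k (ceil5 N))) by lia.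
  rewrite !rpow_pos_eq by lra.
  set (a := 1 - al).
  replace (1 / (Gamma (- al) * Rpower (INR k) (1 + al)))
    with (a * (a - 1) / Gamma (2 - al) * Rpower (INR k) (a - 2)).
  2:{ unfold Rdiv. rewrite Rmult_1_l, Rinv_mult, G0.
      replace (a - 2) with (- (1 + al)) by (unfold a; ring). rewrite Rpower_Ropp. unfold a, Rdiv. ring. }
  replace (al / (12 * Gamma (-2 - al) * Rpower (INR k) (3 + al)))
    with (al / 12 * / Gamma (-2 - al) * Rpower (INR k) (a - 4)).
  2:{ unfold Rdiv. rewrite !Rinv_mult. replace (a - 4) with (- (3 + al)) by (unfold a; ring).
      rewrite Rpower_Ropp. ring. }
  replace (- al - 3) with (a - 4) by (unfold a; ring).
  match goal with |- Rabs (?E + ?F - ?D / ?G) <= _ =>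
    replace (E + F - D / G)
      with (- / G * (D - a * (a - 1) * Rpower (INR k) (a - 2)) + F) by (unfold Rdiv; ring) end.
  eapply Rle_trans; [apply Rabs_triang|].
  rewrite !Rabs_mult, Rabs_Ropp, (Rabs_pos_eq (Rpower _ _)), (Rabs_pos_eq (al / 12))
    by (try (left; apply Rpower_pos); lra).
  pose proof (Rpower_second_diff a (INR k) ltac:(unfold a; lra) Hk).
  pose proof (Rabs_pos (/ Gamma (-2 - al))). pose proof (Rabs_pos (/ Gamma (2 - al))).
  pose proof (Rpower_pos (INR k) (a - 4)).
  assert (al / 12 * Rabs (/ Gamma (-2 - al)) <= Rabs (/ Gamma (-2 - al))) by nra.
  nra.
Qed.

Lemma sigma_bar_defect_last al N n : 0 < al < 1 -> (ceil5 N < n)%nat -> (2 <= n)%nat ->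
  Rabs (sigma_bar_defect al N n n)
  <= (3 * Rabs (/ Gamma (2 - al)) + Rabs (/ Gamma (-1 - al))) * Rpower (INR n) (- al - 2).
Proof.
  intros Hal HK Hn2.
  destruct (inv_Gamma_recurrences al Hal) as [G1 G0].
  assert (Hn : 2 <= INR n) by (apply (le_INR 2); lia).
  unfold sigma_bar_defect, sigma_bar, l1_weight.
  rewrite (proj2 (Nat.eqb_neq n 0)), (proj2 (Nat.ltb_ge n n)), (proj2 (Nat.leb_gt n (ceil5 N))) by lia.
  rewrite !rpow_pos_eq by lra.
  unfold Rdiv. rewrite !Rinv_mult. unfold Rdiv in G0, G1. rewrite G0, G1.
  set (a := 1 - al).
  replace (- al - 1) with (a - 2) by (unfold a; ring).
  replace (- al - 2) with (a - 3) by (unfold a; ring).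
  replace (- al) with (a - 1) at 1 by (unfold a; ring).
  match goal with |- Rabs ?X <= _ =>
    replace X with (- / Gamma (2 - al)
                      * (Rpower (INR n - 1) a - Rpower (INR n) a + a * Rpower (INR n) (a - 1)
                         - a * (a - 1) / 2 * Rpower (INR n) (a - 2))
                    - / 6 * / Gamma (-1 - al) * Rpower (INR n) (a - 3)) by (unfold a, Rdiv; ring) end.
  unfold Rminus at 1. eapply Rle_trans; [apply Rabs_triang|].
  rewrite Rabs_Ropp, !Rabs_mult, Rabs_Ropp, (Rabs_pos_eq (Rpower _ _)), (Rabs_pos_eq (/ 6))
    by (try (left; apply Rpower_pos); lra).
  pose proof (Rpower_backward_diff a (INR n) ltac:(unfold a; lra) Hn).
  pose proof (Rabs_pos (/ Gamma (-1 - al))). pose proof (Rabs_pos (/ Gamma (2 - al))).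
  pose proof (Rpower_pos (INR n) (a - 3)).
  nra.
Qed.

(* Dominates [k^(-3)] for [ceil5 N < k < n] and [n^(-2)] at [k = n], and telescopes. *)
Definition defect_weight (K n k : nat) : R :=
  if Nat.leb k K then 0
  else if Nat.ltb k n then / (INR k - 1) ^ 2 - / INR k ^ 2
  else / (INR k - 1) ^ 2.

Lemma inv_cube_le k : 2 <= k -> / k ^ 3 <= / (k - 1) ^ 2 - / k ^ 2.
Proof.
  intro Hk.
  assert (E : / (k - 1) ^ 2 - / k ^ 2 - / k ^ 3 = (k * k + k - 1) / (k ^ 3 * (k - 1) ^ 2)) by (field; lra).
  assert (0 <= (k * k + k - 1) / (k ^ 3 * (k - 1) ^ 2)).
  { apply Rmult_le_pos; [nra|]. left. apply Rinv_0_lt_compat, Rmult_lt_0_compat; apply pow_lt; lra. }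
  lra.
Qed.

Lemma defect_weight_nonneg K n k : (1 <= K)%nat -> 0 <= defect_weight K n k.
Proof.
  intro HK. unfold defect_weight.
  destruct (Nat.leb k K) eqn:E1; [lra|]. apply Nat.leb_gt in E1.
  assert (Hk : 2 <= INR k) by (apply (le_INR 2); lia).
  pose proof (inv_cube_le (INR k) Hk).
  pose proof (Rinv_0_lt_compat _ (pow_lt (INR k - 1) 2 ltac:(lra))).
  pose proof (Rinv_0_lt_compat _ (pow_lt (INR k) 3 ltac:(lra))).
  destruct (Nat.ltb k n); lra.
Qed.

Lemma defect_weight_partial_sum K n m : (1 <= K)%nat -> (m < n)%nat ->
  sum_f_R0 (defect_weight K n) m = if Nat.leb K m then / INR K ^ 2 - / INR m ^ 2 else 0.
Proof.
  intros HK. induction m as [|m IH]; intro Hm.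
  - unfold defect_weight. simpl. rewrite (proj2 (Nat.leb_gt K 0)) by lia. reflexivity.
  - simpl sum_f_R0. rewrite IH by lia. unfold defect_weight.
    rewrite (proj2 (Nat.ltb_lt (S m) n)) by lia.
    destruct (Nat.leb K m) eqn:E.
    + apply Nat.leb_le in E.
      rewrite (proj2 (Nat.leb_gt (S m) K)), (proj2 (Nat.leb_le K (S m))) by lia.
      rewrite S_INR. replace (INR m + 1 - 1) with (INR m) by ring. ring.
    + apply Nat.leb_gt in E. destruct (Nat.eq_dec K (S m)) as [<-|HKm].
      * rewrite Nat.leb_refl. ring.
      * rewrite (proj2 (Nat.leb_le (S m) K)), (proj2 (Nat.leb_gt K (S m))) by lia. ring.
Qed.

Lemma defect_weight_sum K n : (1 <= K)%nat -> (1 <= n)%nat -> sum_f_R0 (defect_weight K n) n <= / INR K ^ 2.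
Proof.
  intros HK Hn. destruct n as [|p]; [lia|].
  simpl sum_f_R0. rewrite defect_weight_partial_sum by lia. unfold defect_weight.
  rewrite Nat.ltb_irrefl.
  pose proof (Rinv_0_lt_compat _ (pow_lt (INR K) 2 ltac:(apply lt_0_INR; lia))).
  destruct (Nat.leb K p) eqn:E.
  - apply Nat.leb_le in E. rewrite (proj2 (Nat.leb_gt (S p) K)) by lia.
    rewrite S_INR. replace (INR p + 1 - 1) with (INR p) by ring. lra.
  - apply Nat.leb_gt in E. rewrite (proj2 (Nat.leb_le (S p) K)) by lia. lra.
Qed.

Definition defect_const (al : R) : R :=
  11 * Rabs (/ Gamma (2 - al)) + Rabs (/ Gamma (-2 - al)) + Rabs (/ Gamma (-1 - al)).

Lemma defect_const_ge0 al : 0 <= defect_const al.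
Proof.
  unfold defect_const.
  pose proof (Rabs_pos (/ Gamma (2 - al))). pose proof (Rabs_pos (/ Gamma (-2 - al))).
  pose proof (Rabs_pos (/ Gamma (-1 - al))). lra.
Qed.

Lemma scaled_term_le al h c k (p : nat) M0 z d w B B' :
  0 < al -> 0 < h -> 0 < c <= k * h -> 0 < k -> Rabs z <= M0 -> 0 <= B <= B' ->
  Rabs d <= B * Rpower k (- al - INR p) -> / k ^ p <= w ->
  / Rpower h al * (Rabs d * Rabs z) <= M0 * B' * Rpower c (- al) * w.
Proof.
  intros Hal Hh Hc Hk Hz HB Hd Hw.
  assert (S := Rpower_scaled_le al (INR p) h c k Hal Hh Hc Hk).
  rewrite Rpower_neg_INR in S by lra.
  assert (HM0 : 0 <= M0) by (eapply Rle_trans; [apply Rabs_pos|exact Hz]).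
  pose proof (Rpower_pos k (- al - INR p)). pose proof (Rpower_pos c (- al)).
  pose proof (Rinv_0_lt_compat _ (Rpower_pos h al)). pose proof (Rinv_0_lt_compat _ (pow_lt k p Hk)).
  apply Rle_trans with (/ Rpower h al * (B * Rpower k (- al - INR p) * M0)).
  { apply Rmult_le_compat_l; [lra|]. apply Rmult_le_compat; auto using Rabs_pos. }
  replace (/ Rpower h al * (B * Rpower k (- al - INR p) * M0))
    with (B * M0 * (/ Rpower h al * Rpower k (- al - INR p))) by ring.
  apply Rle_trans with (B * M0 * (Rpower c (- al) * / k ^ p)); [apply Rmult_le_compat_l; nra|].
  apply Rle_trans with (B' * M0 * (Rpower c (- al) * w)); [|right; ring].
  apply Rmult_le_compat;
    [apply Rmult_le_pos|apply Rmult_le_pos|apply Rmult_le_compat_r|apply Rmult_le_compat_l]; lra.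
Qed.

Lemma defect_term_bound al N n k h T M0 z : 0 < al < 1 -> (2 <= N)%nat -> 0 < h -> INR N * h = T ->
  (k <= n)%nat -> Rabs z <= M0 ->
  Rabs (/ Rpower h al * (sigma_bar_defect al N n k * z))
  <= M0 * defect_const al * Rpower (T / 5) (- al) * defect_weight (ceil5 N) n k.
Proof.
  intros Hal HN Hh HT Hkn Hz.
  set (K := ceil5 N). pose proof (ceil5_ge N) as H5. fold K in H5.
  pose proof (Rabs_pos (/ Gamma (2 - al))). pose proof (Rabs_pos (/ Gamma (-2 - al))).
  pose proof (Rabs_pos (/ Gamma (-1 - al))).
  destruct (Compare_dec.le_lt_dec k K) as [HkK|HkK].
  { assert (0 <= M0) by (eapply Rle_trans; [apply Rabs_pos|exact Hz]).
    pose proof (defect_const_ge0 al). pose proof (defect_weight_nonneg K n k ltac:(lia)).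
    pose proof (Rpower_pos (T / 5) (- al)).
    rewrite sigma_bar_defect_head, Rmult_0_l, Rmult_0_r, Rabs_R0 by lia.
    apply Rmult_le_pos; [apply Rmult_le_pos; [apply Rmult_le_pos|]|]; lra. }
  assert (Hk2 : 2 <= INR k) by (apply (le_INR 2); lia).
  assert (HTk : 0 < T / 5 <= INR k * h).
  { assert (INR N <= 5 * INR k) by (apply ceil5_le_INR; lia).
    assert (0 < INR N) by (apply lt_0_INR; lia). rewrite <- HT. nra. }
  rewrite !Rabs_mult, (Rabs_pos_eq (/ Rpower h al)) by (left; apply Rinv_0_lt_compat, Rpower_pos).
  unfold defect_const. destruct (Nat.eq_dec k n) as [->|Hne].
  - apply (scaled_term_le al h (T / 5) (INR n) 2 M0 z _ _
             (3 * Rabs (/ Gamma (2 - al)) + Rabs (/ Gamma (-1 - al)))); try lra.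
    + replace (INR 2) with 2 by (simpl; ring). apply sigma_bar_defect_last; [lra|lia|lia].
    + unfold defect_weight. rewrite (proj2 (Nat.leb_gt n K)), Nat.ltb_irrefl by lia.
      apply Rinv_le_contravar; [apply pow_lt; lra|]. apply pow_incr. lra.
  - apply (scaled_term_le al h (T / 5) (INR k) 3 M0 z _ _
             (8 * Rabs (/ Gamma (2 - al)) + Rabs (/ Gamma (-2 - al)))); try lra.
    + replace (INR 3) with 3 by (simpl; ring). apply sigma_bar_defect_interior; [lra|lia|lia|lia].
    + unfold defect_weight. rewrite (proj2 (Nat.leb_gt k K)), (proj2 (Nat.ltb_lt k n)) by lia.
      apply inv_cube_le. lra.
Qed.

Lemma defect_sum_bound al T N n h M0 (z : nat -> R) :
  0 < al < 1 -> (2 <= N)%nat -> (1 <= n)%nat -> 0 < h -> INR N * h = T ->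
  (forall k, (k <= n)%nat -> Rabs (z k) <= M0) ->
  Rabs (/ Rpower h al * sum_f_R0 (fun k => sigma_bar_defect al N n k * z k) n)
  <= M0 * defect_const al * Rpower (T / 5) (- al) * 25 / T ^ 2 * Rpower T al * Rpower h (2 - al).
Proof.
  intros Hal HN Hn Hh HT Hz.
  set (K := ceil5 N). pose proof (ceil5_ge N) as H5. fold K in H5.
  assert (HN0 : 1 <= INR N) by (apply (le_INR 1); lia).
  assert (HT0 : 0 < T) by (rewrite <- HT; nra).
  set (c := M0 * defect_const al * Rpower (T / 5) (- al)).
  assert (Hc : 0 <= c).
  { assert (0 <= M0) by (eapply Rle_trans; [apply Rabs_pos|apply (Hz 0%nat); lia]).
    pose proof (defect_const_ge0 al). pose proof (Rpower_pos (T / 5) (- al)).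
    unfold c. apply Rmult_le_pos; [apply Rmult_le_pos|]; lra. }
  assert (Hsum : Rabs (/ Rpower h al * sum_f_R0 (fun k => sigma_bar_defect al N n k * z k) n)
                 <= c / INR K ^ 2).
  { rewrite scal_sum. eapply Rle_trans; [apply Rsum_abs|].
    eapply Rle_trans.
    { apply (sum_Rle _ (fun k => defect_weight K n k * c)). intros k Hk.
      rewrite Rmult_comm, (Rmult_comm (defect_weight _ _ _)). apply defect_term_bound; auto. }
    rewrite <- scal_sum. unfold Rdiv. apply Rmult_le_compat_l; [exact Hc|].
    apply defect_weight_sum; lia. }
  assert (HK : / INR K ^ 2 <= 25 / T ^ 2 * (h * h)).
  { assert (INR N <= 5 * INR K) by (apply ceil5_le_INR; lia).
    rewrite <- HT. replace (25 / (INR N * h) ^ 2 * (h * h)) with (/ (INR N / 5) ^ 2) by (field; lra).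
    apply Rinv_le_contravar; [apply pow_lt; lra|]. apply pow_incr. lra. }
  assert (Hh2 := sq_le_Rpower al h T ltac:(lra) ltac:(split; [lra|rewrite <- HT; nra])).
  eapply Rle_trans; [exact Hsum|].
  assert (0 <= 25 / T ^ 2) by (apply Rmult_le_pos; [lra|left; apply Rinv_0_lt_compat, pow_lt; lra]).
  unfold Rdiv at 1. fold c.
  apply Rle_trans with (c * (25 / T ^ 2 * (Rpower T al * Rpower h (2 - al)))); [|right; unfold Rdiv; ring].
  apply Rmult_le_compat_l; [exact Hc|]. eapply Rle_trans; [exact HK|]. apply Rmult_le_compat_l; lra.
Qed.

Definition scheme_const (al T M0 M2 : R) : R :=
  Rabs (/ Gamma (1 - al)) * M2 * (2 + / (1 - al))
  + M0 * defect_const al * Rpower (T / 5) (- al) * 25 / T ^ 2 * Rpower T al.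

Lemma sigma_bar_scheme_error al x M0 M2 (y y1 y2 : R -> R) T N n h :
  0 < al < 1 -> 0 < x ->
  (forall t, 0 <= t <= x -> is_derive y t (y1 t)) ->
  (forall t, 0 <= t <= x -> is_derive y1 t (y2 t)) ->
  (forall t, 0 <= t <= x -> Rabs (y2 t) <= M2) ->
  (forall t, 0 <= t <= x -> Rabs (y t) <= M0) ->
  (2 <= N)%nat -> 0 < h -> INR N * h = T -> INR n * h = x ->
  Rabs (/ Rpower h al * sum_f_R0 (fun k => sigma_bar al N n k * y (INR (n - k) * h)) n
        - caputo_integral al x y1 / Gamma (1 - al))
  <= scheme_const al T M0 M2 * Rpower h (2 - al).
Proof.
  intros Hal Hx Hy1 Hy2 HM2 HM0 HN Hh HNh Hnx.
  assert (Hn : (1 <= n)%nat) by (destruct n; [simpl in Hnx; lra|lia]).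
  rewrite (scheme_decomposition al x) by assumption.
  match goal with |- Rabs (?L / ?G + ?E - ?I / ?G) <= _ =>
    replace (L / G + E - I / G) with ((L - I) * / G + E) by (unfold Rdiv; ring) end.
  eapply Rle_trans; [apply Rabs_triang|].
  assert (E1 := L1_error al x M2 y y1 y2 Hal Hx Hy1 Hy2 HM2 n h Hn Hh Hnx).
  assert (E2 := defect_sum_bound al T N n h M0 (fun k => y (INR (n - k) * h)) Hal HN Hn Hh HNh).
  specialize (E2 ltac:(intros k Hk; apply HM0; split; [apply Rmult_le_pos; [apply pos_INR|lra]|];
    rewrite <- Hnx; apply Rmult_le_compat_r; [lra|apply le_INR; lia])).
  rewrite Rabs_mult, Rmult_comm.
  apply Rmult_le_compat_l with (r := Rabs (/ Gamma (1 - al))) in E1; [|apply Rabs_pos].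
  unfold scheme_const. lra.
Qed.

Lemma continuous_bounded (f : R -> R) a b : a <= b -> (forall t, a <= t <= b -> continuity_pt f t) ->
  exists M, forall t, a <= t <= b -> Rabs (f t) <= M.
Proof.
  intros Hab Hf.
  destruct (continuity_ab_maj (fun t => Rabs (f t)) a b Hab) as [c [Hc _]].
  - intros t Ht. apply (continuity_pt_comp f Rabs); [apply Hf, Ht|apply Rcontinuity_abs].
  - exists (Rabs (f c)). exact Hc.
Qed.

Theorem mainTheorem10 (alpha T x : R) (y y1 y2 : R -> R)
  (Halpha : 0 < alpha < 1) (HT : 0 < T) (Hx : 0 < x <= T)
  (Hy1 : forall t, 0 <= t <= T -> derivable_pt_lim y t (y1 t))
  (Hy2 : forall t, 0 <= t <= T -> derivable_pt_lim y1 t (y2 t))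
  (Hy2c : forall t, 0 <= t <= T -> continuity_pt y2 t) :
  exists D, is_caputo y1 alpha x D /\
  exists C h0, 0 < h0 /\
    forall (N n : nat), (2 <= N)%nat ->
      let h := T / INR N in
      INR n * h = x -> h < h0 ->
      Rabs (/ rpow h alpha *
              sum_f_R0 (fun k => sigma_bar alpha N n k * y (INR (n - k) * h)) n
            - D)
      <= C * rpow h (2 - alpha).
Proof.
  assert (Hy1' : forall t, 0 <= t <= x -> is_derive y t (y1 t))
    by (intros; apply is_derive_Reals, Hy1; lra).
  assert (Hy2' : forall t, 0 <= t <= x -> is_derive y1 t (y2 t))
    by (intros; apply is_derive_Reals, Hy2; lra).
  destruct (continuous_bounded y2 0 x ltac:(lra) ltac:(intros; apply Hy2c; lra)) as [M2 HM2].
  destruct (continuous_bounded y 0 x ltac:(lra)) as [M0 HM0].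
  { intros t Ht. apply derivable_continuous_pt. exists (y1 t). apply Hy1. lra. }
  exists (caputo_integral alpha x y1 / Gamma (1 - alpha)). split.
  { exists (caputo_integral alpha x y1). split; [|reflexivity].
    apply (improper_caputo_integral _ _ M2 _ y2); auto; lra. }
  exists (scheme_const alpha T M0 M2), T. split; [exact HT|].
  intros N n HN h Hnx _.
  assert (HN0 : 0 < INR N) by (apply lt_0_INR; lia).
  assert (Hh : 0 < h) by (apply Rdiv_lt_0_compat; lra).
  rewrite !rpow_pos_eq by lra.
  apply (sigma_bar_scheme_error alpha x M0 M2 y y1 y2); auto; [lra|unfold h; field; lra].
Qed.
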